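(* Let $\mathbb{k}$ be a commutative ring containing $\mathbb{Q}$ and $M$ a filtered $\mathbb{k}$-module. Let $G^{(1)},H^{(1)}\subseteq GL^{(1)}_{\mathbb{k}}(M)$ be subgroups with $\langle G^{(1)},H^{(1)}\rangle=G^{(1)}\cdot H^{(1)}$, and $T_G,T_H\subseteq\mathrm{End}^{(1)}_{\mathbb{k}}(M)$ $\mathbb{k}$-submodules with $[T_G,T_H]\subseteq T_H$ (where $[\xi,\eta]=\xi\eta-\eta\xi$). Suppose $(T_G,G^{(1)})$ and $(T_H,H^{(1)})$ are of pointwise Lie type, realized by truncated exponential and logarithm maps in the following sense (stated for $G$; the same for $H$): for every $z\in M$, every $\xi\in T_G$ and every $g\in G^{(1)}$, and every integer $N\ge\max(\mathrm{ord}(\xi(z)),\mathrm{ord}((g-\mathrm{Id})(z)))$ when this maximum is finite, there are $\phi^{exp}_{N,z},\phi^{ln}_{N,z}\in\mathrm{End}^{(N+1)}_{\mathbb{k}}(M)$ such that $\Psi^{exp}(\xi,z):=\sum_{j=0}^N\frac{\xi^j}{j!}+\phi^{exp}_{N,z}\in G^{(1)}$ and $\Psi^{ln}(g,z):=\sum_{j=1}^N\frac{(-1)^{j+1}(g-\mathrm{Id})^j}{j}+\phi^{ln}_{N,z}\in T_G$, and these elements serve as the elements required in the definition of pointwise Lie type for $\xi,z$ (resp. $g,z$). Then the pair $(T_G+T_H,\ G^{(1)}\cdot H^{(1)})$ is of pointwise Lie type.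
   Context: $M=M_0\supseteq M_1\supseteq\cdots$ is a descending filtration by $\mathbb{k}$-submodules, $\mathrm{ord}(z)=\sup\{j:z\in M_j\}$, $\mathrm{End}^{(i)}_{\mathbb{k}}(M)=\{\phi:\phi(M_j)\subseteq M_{j+i}\ \forall j\}$, and $GL^{(i)}_{\mathbb{k}}(M)$ ($i\ge1$) is the group of $\mathbb{k}$-linear automorphisms $g$ with $g^{\pm1}(M_j)\subseteq M_j$ for all $j$ and $g-\mathrm{Id},g^{-1}-\mathrm{Id}\in\mathrm{End}^{(i)}_{\mathbb{k}}(M)$. A pair $(T,G^{(1)})$ (subgroup $G^{(1)}\subseteq GL^{(1)}$, submodule $T\subseteq\mathrm{End}^{(1)}$) is of pointwise Lie type if (a) for every $\xi\in T$ and $z\in M$ there is $g\in G^{(1)}$ with: if $\mathrm{ord}(\xi(z))<\infty$ then $\mathrm{ord}((g-\mathrm{Id}-\xi)(z))>\mathrm{ord}(\xi(z))$; (b) for every $g\in G^{(1)}$ and $z\in M$ there is $\xi\in T$ with: if $\mathrm{ord}((g-\mathrm{Id})(z))<\infty$ then $\mathrm{ord}((g-\mathrm{Id}-\xi)(z))>\mathrm{ord}((g-\mathrm{Id})(z))$. *)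

From mathcomp Require Import all_boot all_order all_algebra.
Set Implicit Arguments. Unset Strict Implicit. Unset Printing Implicit Defensive.
Import GRing.Theory.
Local Open Scope ring_scope.

Section Filtered.
Variables (R : comUnitRingType) (M : lmodType R).

Definition filtration (F : nat -> M -> Prop) : Prop :=
  [/\ (forall x, F 0%N x),
      (forall j x, F j.+1 x -> F j x),
      (forall j, F j 0),
      (forall j x y, F j x -> F j y -> F j (x + y)) &
      (forall j (a : R) x, F j x -> F j (a *: x))].

(* ord z = sup {j | z ∈ M_j}.  [ord_eq F z m] : ord z is finite and equals m
   (the set {j | z ∈ M_j} has maximum m); [ord_gt F w m] : ord w > m. *)
Definition ord_eq (F : nat -> M -> Prop) (z : M) (m : nat) : Prop :=
  F m z /\ (forall j, F j z -> (j <= m)%N).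
Definition ord_gt (F : nat -> M -> Prop) (w : M) (m : nat) : Prop :=
  exists j, (m < j)%N /\ F j w.

Definition klinear (f : M -> M) : Prop :=
  forall (a : R) x y, f (a *: x + y) = a *: f x + f y.

Definition End_i (F : nat -> M -> Prop) (i : nat) (f : M -> M) : Prop :=
  klinear f /\ forall j x, F j x -> F (j + i)%N (f x).

Definition GL_i (F : nat -> M -> Prop) (i : nat) (g : M -> M) : Prop :=
  exists ginv : M -> M,
    [/\ cancel g ginv, cancel ginv g, klinear g,
        (forall j x, F j x -> F j (g x)) /\ (forall j x, F j x -> F j (ginv x)) &
        End_i F i (fun x => g x - x) /\ End_i F i (fun x => ginv x - x)].

Definition subgroup1 (F : nat -> M -> Prop) (S : (M -> M) -> Prop) : Prop :=
  [/\ (forall g, S g -> GL_i F 1 g),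
      S id,
      (forall g h, S g -> S h -> S (g \o h)) &
      (forall g h, S g -> cancel g h -> cancel h g -> S h)].

Definition submod1 (F : nat -> M -> Prop) (T : (M -> M) -> Prop) : Prop :=
  [/\ (forall f, T f -> End_i F 1 f),
      T (fun _ => 0),
      (forall f g, T f -> T g -> T (fun x => f x + g x)) &
      (forall (a : R) f, T f -> T (fun x => a *: f x))].

Definition gen_subgroup (F : nat -> M -> Prop) (G H : (M -> M) -> Prop)
  (f : M -> M) : Prop :=
  forall S, subgroup1 F S -> (forall g, G g -> S g) -> (forall h, H h -> S h) -> S f.

Definition prod_set (G H : (M -> M) -> Prop) (f : M -> M) : Prop :=
  exists g h, [/\ G g, H h & f = g \o h].

Definition sum_set (T1 T2 : (M -> M) -> Prop) (f : M -> M) : Prop :=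
  exists xi eta, [/\ T1 xi, T2 eta & f = (fun x => xi x + eta x)].

Definition pointwise_Lie (F : nat -> M -> Prop) (T G : (M -> M) -> Prop) : Prop :=
  (forall xi z, T xi -> exists g, G g /\
     forall m, ord_eq F (xi z) m -> ord_gt F (g z - z - xi z) m) /\
  (forall g z, G g -> exists xi, T xi /\
     forall m, ord_eq F (g z - z) m -> ord_gt F (g z - z - xi z) m).

Definition Psi_exp (N : nat) (xi phi : M -> M) (x : M) : M :=
  \sum_(j < N.+1) ((j`!)%:R)^-1 *: iter j xi x + phi x.

Definition Psi_ln (N : nat) (g phi : M -> M) (x : M) : M :=
  \sum_(1 <= j < N.+1) ((-1) ^+ j.+1 / (j%:R)) *: iter j (fun y => g y - y) x
  + phi x.

Definition exp_ln_realized (F : nat -> M -> Prop) (T G : (M -> M) -> Prop) : Prop :=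
  (forall xi z N, T xi -> (forall m, ord_eq F (xi z) m -> (m <= N)%N) ->
     exists phi, [/\ End_i F N.+1 phi, G (Psi_exp N xi phi) &
       forall m, ord_eq F (xi z) m ->
         ord_gt F (Psi_exp N xi phi z - z - xi z) m]) /\
  (forall g z N, G g -> (forall m, ord_eq F (g z - z) m -> (m <= N)%N) ->
     exists phi, [/\ End_i F N.+1 phi, T (Psi_ln N g phi) &
       forall m, ord_eq F (g z - z) m ->
         ord_gt F (g z - z - Psi_ln N g phi z) m]).

End Filtered.

From HB Require Import structures.
From mathcomp Require Import all_boot all_order all_algebra.
From mathcomp Require Import boolp.

(* Work in the ring [fop] of R-linear operators on M preserving the filtration,
   modulo End^(n): truncated exponentials and logarithms then satisfy the usual
   identities, and the realization hypotheses say that G and H agree with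
   exp(T_G) and exp(T_H) up to End^(n), for every n.  The heart of the proof is
   that exp(-xi) exp(xi + eta) = exp(a) modulo End^(n) for some a in T_H,
   whenever xi is in T_G and eta in T_H.  View C(t) = exp(-t xi) exp(t (xi + eta))
   as a polynomial in t and improve, one filtration level at a time, a
   polynomial a(t) with coefficients in T_H such that C(t) = exp(a(t)).  Since
   C(2t) = exp(-t xi) C(t) exp(t xi) C(t) and [T_G, T_H] is contained in T_H,
   the error e(t) satisfies e(2t) - 2 e(t) in T_H at the next level, and
   interpolation at t = 0, 1, 2, ... (possible because Q is contained in R)
   puts all coefficients of e of degree at least 2 in T_H.  Hence G.H and
   exp(T_G + T_H) agree to every order, and evaluating at z a congruence modulo
   End^(ord + 2) gives the pointwise conditions. *)

Set Implicit Arguments. Unset Strict Implicit. Unset Printing Implicit Defensive.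
Import GRing.Theory.
Local Open Scope ring_scope.

Section FilteredOperators.
Variables (R : comUnitRingType) (M : lmodType R) (F : nat -> M -> Prop).
Hypothesis hF : filtration F.

Lemma filtr_top x : F 0 x. Proof. by case: hF. Qed.
Lemma filtr0 j : F j 0. Proof. by case: hF. Qed.
Lemma filtrD j x y : F j x -> F j y -> F j (x + y).
Proof. by case: hF => _ _ _ h _; apply: h. Qed.
Lemma filtrZ j (a : R) x : F j x -> F j (a *: x).
Proof. by case: hF => _ _ _ _ h; apply: h. Qed.
Lemma filtrN j x : F j x -> F j (- x).
Proof. by move=> h; rewrite -scaleN1r; apply: filtrZ. Qed.
Lemma filtrB j x y : F j x -> F j y -> F j (x - y).
Proof. by move=> hx hy; apply/filtrD/filtrN. Qed.
Lemma filtr_le i j x : (i <= j)%N -> F j x -> F i x.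
Proof.
move=> /subnK <-; elim: (j - i)%N => [|k IH] //= h; apply: IH.
by case: hF => _ h1 _ _ _; apply: h1; rewrite addSn in h.
Qed.

Lemma ord_eq_uniq w m m' : ord_eq F w m -> ord_eq F w m' -> m = m'.
Proof. by case=> h1 h2 [h1' h2']; apply/eqP; rewrite eqn_leq h2' // h2. Qed.

Lemma ord_eq_choice A (P : A -> Prop) (w : M) (d : A -> M) a0 : P a0 ->
    (forall m, ord_eq F w m -> exists2 a, P a & ord_gt F (d a) m) ->
  exists a, P a /\ forall m, ord_eq F w m -> ord_gt F (d a) m.
Proof.
move=> Pa0 h; have [[m hm] | no] := EM (exists m, ord_eq F w m).
  have [a Pa ha] := h m hm; exists a; split=> // m' hm'.
  by rewrite -(ord_eq_uniq hm hm').
by exists a0; split=> // m hm; case: no; exists m.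
Qed.

Lemma ord_eq_0 m : ~ ord_eq F 0 m.
Proof. by case=> _ /(_ m.+1 (filtr0 _)); rewrite ltnn. Qed.

Definition filtered_linear (f : M -> M) :=
  klinear f /\ forall j x, F j x -> F j (f x).

Record fop := Fop { fop_fun :> M -> M; fop_filtered : filtered_linear fop_fun }.
HB.instance Definition _ := gen_eqMixin fop.
HB.instance Definition _ := gen_choiceMixin fop.

Lemma fopP (a b : fop) : a =1 b -> a = b.
Proof.
case: a b => f hf [g hg] /= /funext eqfg; subst g.
by congr Fop; exact: Prop_irrelevance.
Qed.

Lemma fop_lin (a : fop) : klinear a. Proof. by case: (fop_filtered a). Qed.
Lemma fop_filtr (a : fop) j x : F j x -> F j (a x).
Proof. by case: (fop_filtered a) => _; apply. Qed.
Lemma fopD (a : fop) x y : a (x + y) = a x + a y.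
Proof. by rewrite -[x]scale1r fop_lin !scale1r. Qed.
Lemma fop0 (a : fop) : a 0 = 0.
Proof. by have := fop_lin a (-1) 0 0; rewrite scaler0 add0r scaleN1r addNr. Qed.
Lemma fopZ (a : fop) r x : a (r *: x) = r *: a x.
Proof. by rewrite -[r *: x]addr0 fop_lin fop0 addr0. Qed.
Lemma fopN (a : fop) x : a (- x) = - a x.
Proof. by rewrite -scaleN1r fopZ scaleN1r. Qed.

Lemma filtered_linear0 : filtered_linear (fun _ => 0).
Proof. by split=> [a x y|j x _]; [rewrite scaler0 addr0 | exact: filtr0]. Qed.
Lemma filtered_linearD (a b : fop) : filtered_linear (fun x => a x + b x).
Proof.
split=> [r x y|j x h]; last by apply: filtrD; apply: fop_filtr.
by rewrite !fopD !fopZ scalerDr addrACA.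
Qed.
Lemma filtered_linearN (a : fop) : filtered_linear (fun x => - a x).
Proof.
split=> [r x y|j x h]; last by apply/filtrN/fop_filtr.
by rewrite fopD fopZ opprD scalerN.
Qed.
Lemma filtered_linear1 : filtered_linear id. Proof. by []. Qed.
Lemma filtered_linearM (a b : fop) : filtered_linear (a \o b).
Proof.
split=> [r x y|j x h] /=; last by do 2 apply: fop_filtr.
by rewrite !fopD !fopZ.
Qed.

Definition fop_zero := Fop filtered_linear0.
Definition fop_add (a b : fop) := Fop (filtered_linearD a b).
Definition fop_opp (a : fop) := Fop (filtered_linearN a).
Definition fop_one := Fop filtered_linear1.
Definition fop_mul (a b : fop) := Fop (filtered_linearM a b).

Lemma fop_addA : associative fop_add.
Proof. by move=> a b c; apply: fopP => x /=; rewrite addrA. Qed.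
Lemma fop_addC : commutative fop_add.
Proof. by move=> a b; apply: fopP => x /=; rewrite addrC. Qed.
Lemma fop_add0r : left_id fop_zero fop_add.
Proof. by move=> a; apply: fopP => x /=; rewrite add0r. Qed.
Lemma fop_addNr : left_inverse fop_zero fop_opp fop_add.
Proof. by move=> a; apply: fopP => x /=; rewrite addNr. Qed.
Lemma fop_mulA : associative fop_mul. Proof. by move=> a b c; apply: fopP. Qed.
Lemma fop_mul1r : left_id fop_one fop_mul. Proof. by move=> a; apply: fopP. Qed.
Lemma fop_mulr1 : right_id fop_one fop_mul. Proof. by move=> a; apply: fopP. Qed.
Lemma fop_mulDl : left_distributive fop_mul fop_add.
Proof. by move=> a b c; apply: fopP. Qed.
Lemma fop_mulDr : right_distributive fop_mul fop_add.
Proof. by move=> a b c; apply: fopP => x /=; rewrite fopD. Qed.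

(* The ring of filtered operators is a nonzero ring only when M <> 0, which
   [{poly fop}] below requires. *)
Variable x0 : M.
Hypothesis x0_neq0 : x0 != 0.

Lemma fop_one_neq0 : fop_one != fop_zero.
Proof. by apply: contra_neq x0_neq0 => /(congr1 (fun f : fop => f x0)). Qed.

HB.instance Definition _ := GRing.isNzRing.Build fop fop_addA fop_addC fop_add0r
  fop_addNr fop_mulA fop_mul1r fop_mulr1 fop_mulDl fop_mulDr fop_one_neq0.

Lemma fop_addE (a b : fop) x : (a + b) x = a x + b x. Proof. by []. Qed.
Lemma fop_mulE (a b : fop) x : (a * b) x = a (b x). Proof. by []. Qed.
Lemma fop_oppE (a : fop) x : (- a) x = - a x. Proof. by []. Qed.
Lemma fop_subE (a b : fop) x : (a - b) x = a x - b x. Proof. by []. Qed.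
Lemma fop_oneE x : (1 : fop) x = x. Proof. by []. Qed.
Lemma fop_expE (a : fop) k x : (a ^+ k) x = iter k a x.
Proof. by elim: k => [|k IH] //; rewrite exprS fop_mulE IH. Qed.
Lemma fop_sumE I (r : seq I) (P : pred I) (f : I -> fop) x :
  (\sum_(i <- r | P i) f i) x = \sum_(i <- r | P i) f i x.
Proof. by elim/big_rec2: _ => // i y a _ <-. Qed.

Lemma filtered_linear_scale (r : R) : filtered_linear (fun x => r *: x).
Proof.
split=> [a x y|j x h]; last exact: filtrZ.
by rewrite scalerDr !scalerA mulrC.
Qed.
Definition scal r := Fop (filtered_linear_scale r).

Lemma scalE r x : scal r x = r *: x. Proof. by []. Qed.
Lemma scalC r (a : fop) : scal r * a = a * scal r.
Proof. by apply: fopP => x; rewrite !fop_mulE !scalE fopZ. Qed.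
Lemma scal1 : scal 1 = 1. Proof. by apply: fopP => x; rewrite scalE scale1r. Qed.
Lemma scal0 : scal 0 = 0. Proof. by apply: fopP => x; rewrite scalE scale0r. Qed.
Lemma scalM r s : scal (r * s) = scal r * scal s.
Proof. by apply: fopP => x; rewrite fop_mulE !scalE scalerA. Qed.
Lemma scalD r s : scal (r + s) = scal r + scal s.
Proof. by apply: fopP => x; rewrite fop_addE !scalE scalerDl. Qed.
Lemma scalN r : scal (- r) = - scal r.
Proof. by apply: fopP => x; rewrite fop_oppE !scalE scaleNr. Qed.
Lemma scal_sum I (r : seq I) (P : pred I) (f : I -> R) :
  scal (\sum_(i <- r | P i) f i) = \sum_(i <- r | P i) scal (f i).
Proof. by elim/big_rec2: _ => [|i y a _ <-]; rewrite ?scal0 ?scalD. Qed.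
Lemma scal_nat n : scal n%:R = n%:R.
Proof. by elim: n => [|n IH]; rewrite ?scal0 // -addn1 !natrD scalD IH scal1. Qed.
Lemma scal_natX t e : scal ((t%:R : R) ^+ e) = t%:R ^+ e.
Proof. by rewrite -natrX scal_nat natrX. Qed.
Lemma scalMA r s (a b : fop) : scal r * a * (scal s * b) = scal (r * s) * (a * b).
Proof. by rewrite -mulrA [a * _]mulrA -scalC -!mulrA mulrA -scalM. Qed.

Definition lvl k (a : fop) := forall j x, F j x -> F (j + k) (a x).

Lemma lvl0 a : lvl 0 a. Proof. by move=> j x h; rewrite addn0; apply: fop_filtr. Qed.
Lemma lvl_le k l a : (k <= l)%N -> lvl l a -> lvl k a.
Proof. by move=> kl h j x /h; apply: filtr_le; rewrite leq_add2l. Qed.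
Lemma lvl_zero k : lvl k 0. Proof. by move=> j x _; exact: filtr0. Qed.
Lemma lvlD k a b : lvl k a -> lvl k b -> lvl k (a + b).
Proof. by move=> ha hb j x h; apply: filtrD; [apply: ha | apply: hb]. Qed.
Lemma lvlN k a : lvl k a -> lvl k (- a).
Proof. by move=> ha j x h; apply/filtrN/ha. Qed.
Lemma lvlB k a b : lvl k a -> lvl k b -> lvl k (a - b).
Proof. by move=> ha hb; apply/lvlD/lvlN. Qed.
Lemma lvlM k l a b : lvl k a -> lvl l b -> lvl (k + l) (a * b).
Proof. by move=> ha hb j x h; rewrite fop_mulE (addnC k) addnA; apply/ha/hb. Qed.
Lemma lvlMl k a b : lvl k b -> lvl k (a * b).
Proof. by move=> hb; rewrite -[k]add0n; apply: lvlM (lvl0 a) hb. Qed.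
Lemma lvlMr k a b : lvl k a -> lvl k (a * b).
Proof. by move=> ha; rewrite -[k]addn0; apply: lvlM ha (lvl0 b). Qed.
Lemma lvl_sum k I (r : seq I) (P : pred I) (f : I -> fop) :
  (forall i, P i -> lvl k (f i)) -> lvl k (\sum_(i <- r | P i) f i).
Proof. by move=> h; apply: big_ind => //; [apply: lvl_zero | apply: lvlD]. Qed.
Lemma lvlX i k a : lvl i a -> lvl (i * k) (a ^+ k).
Proof.
move=> ha; elim: k => [|k IH]; first by rewrite muln0; apply: lvl0.
by rewrite exprS mulnS; apply: lvlM.
Qed.
Lemma lvlX1 k a : lvl 1 a -> lvl k (a ^+ k).
Proof. by move/(lvlX k); rewrite mul1n. Qed.
Lemma lvl_sq j a : (0 < j)%N -> lvl j a -> lvl j.+1 (a * a).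
Proof. by move=> j0 ha; apply: lvl_le (lvlM ha ha); rewrite -addn1 leq_add2l. Qed.

Definition eqm k (a b : fop) := lvl k (a - b).
Notation "a = b %[lvl k ]" := (eqm k a b) (at level 70, b at next level).

Lemma eqm_refl k a : a = a %[lvl k]. Proof. by rewrite /eqm subrr; apply: lvl_zero. Qed.
Lemma eqm_sym k a b : a = b %[lvl k] -> b = a %[lvl k].
Proof. by move=> h; rewrite /eqm -opprB; apply: lvlN. Qed.
Lemma eqm_trans k a b c : a = b %[lvl k] -> b = c %[lvl k] -> a = c %[lvl k].
Proof. by move=> h1 h2; rewrite /eqm -(subrKA b); apply: lvlD. Qed.
Lemma eqm_le k l a b : (k <= l)%N -> a = b %[lvl l] -> a = b %[lvl k].
Proof. exact: lvl_le. Qed.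
Lemma eqmD k a b c d : a = b %[lvl k] -> c = d %[lvl k] -> a + c = b + d %[lvl k].
Proof. by move=> h1 h2; rewrite /eqm opprD addrACA; apply: lvlD. Qed.
Lemma eqmN k a b : a = b %[lvl k] -> - a = - b %[lvl k].
Proof. by move=> h; rewrite /eqm -opprD; apply: lvlN. Qed.
Lemma eqmB k a b c d : a = b %[lvl k] -> c = d %[lvl k] -> a - c = b - d %[lvl k].
Proof. by move=> h1 h2; apply/eqmD/eqmN. Qed.
Lemma eqmM k a b c d : a = b %[lvl k] -> c = d %[lvl k] -> a * c = b * d %[lvl k].
Proof.
move=> h1 h2; rewrite /eqm -(subrKA (b * c)) -mulrBl -mulrBr.
by apply: lvlD; [apply: lvlMr | apply: lvlMl].
Qed.
Lemma eqmMl k a c d : c = d %[lvl k] -> a * c = a * d %[lvl k].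
Proof. exact/eqmM/eqm_refl. Qed.
Lemma eqmMr k a b c : a = b %[lvl k] -> a * c = b * c %[lvl k].
Proof. by move=> h; apply: eqmM h (eqm_refl _ _). Qed.
Lemma eqm_sum k I (r : seq I) (P : pred I) (f g : I -> fop) :
  (forall i, P i -> f i = g i %[lvl k]) ->
  \sum_(i <- r | P i) f i = \sum_(i <- r | P i) g i %[lvl k].
Proof. by move=> h; rewrite /eqm -sumrB; apply: lvl_sum. Qed.
Lemma eqm_addr k a b : lvl k b -> a + b = a %[lvl k].
Proof. by rewrite /eqm addrC addKr. Qed.
Lemma eqm_lvl k a b : a = b %[lvl k] -> lvl k b -> lvl k a.
Proof. by move=> h1 h2; rewrite -(subrK b a); apply: lvlD. Qed.

Hypothesis hQ : forall n : nat, (n.+1)%:R \is a @GRing.unit R.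

Lemma natr_unit m : (0 < m)%N -> (m%:R : R) \is a GRing.unit.
Proof. by case: m => // m _; apply: hQ. Qed.

Definition ifact k := scal ((k`!)%:R)^-1.

Lemma ifact0 : ifact 0 = 1. Proof. by rewrite /ifact invr1 scal1. Qed.
Lemma ifact1 : ifact 1 = 1. Proof. by rewrite /ifact invr1 scal1. Qed.

Lemma ifact_bin k i : (i <= k)%N ->
  ifact k * 'C(k, i)%:R = ifact i * ifact (k - i).
Proof.
move=> ik; rewrite -scal_nat -!scalM -(bin_fact ik) !natrM; congr scal.
have fU j : ((j`!)%:R : R) \is a GRing.unit by apply/natr_unit/fact_gt0.
have CU : ('C(k, i)%:R : R) \is a GRing.unit by apply: natr_unit; rewrite bin_gt0.
by rewrite !invrM ?unitrM ?fU // divrK // mulrC.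
Qed.

Lemma eqm_cauchy n (u v : nat -> fop) :
    (forall i, lvl i (u i)) -> (forall i, lvl i (v i)) ->
  \sum_(k < n) \sum_(i < k.+1) u i * v (k - i)%N
    = (\sum_(i < n) u i) * (\sum_(i < n) v i) %[lvl n].
Proof.
move=> hu hv; set p := \poly_(i < n) u i; set q := \poly_(i < n) v i.
have sum_at1 (w : nat -> fop) : \sum_(i < n) w i = (\poly_(i < n) w i).[1].
  by rewrite horner_poly; apply: eq_bigr => i _; rewrite expr1n mulr1.
have lvl_p i : lvl i p`_i by rewrite coef_poly; case: ifP => _; [apply: hu | apply: lvl_zero].
have lvl_q i : lvl i q`_i by rewrite coef_poly; case: ifP => _; [apply: hv | apply: lvl_zero].
rewrite !sum_at1 -/p -/q -hornerM_comm; last by rewrite /comm_poly mul1r mulr1.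
have sz : (size (p * q)%R <= n + n)%N.
  apply: (leq_trans (size_polyMleq p q)); rewrite -subn1 leq_subLR.
  by apply: (leq_trans (leq_add (size_poly n u) (size_poly n v))); rewrite leq_addl.
rewrite (horner_coef_wide _ sz) big_split_ord /=; apply: eqm_sym.
apply: eqm_trans (eqm_addr _ _) _.
  apply: lvl_sum => k _; rewrite expr1n mulr1 coefM; apply: lvl_sum => j _.
  apply: lvl_le (lvlM (lvl_p j) (lvl_q _)); rewrite subnKC ?leq_addr //.
  by rewrite -ltnS.
apply: eqm_sum => k _; rewrite expr1n mulr1 coefM.
apply: eqm_sum => j _; rewrite !coef_poly.
have jn : (j < n)%N by apply: leq_ltn_trans (ltn_ord k); rewrite -ltnS.
by rewrite jn (leq_ltn_trans (leq_subr _ _) (ltn_ord k)); apply: eqm_refl.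
Qed.

Definition expT n (X : fop) := \sum_(k < n) ifact k * X ^+ k.

Lemma expTD n X Y : X * Y = Y * X -> lvl 1 X -> lvl 1 Y ->
  expT n (X + Y) = expT n X * expT n Y %[lvl n].
Proof.
move=> cXY hX hY.
have -> : expT n (X + Y) = \sum_(k < n) \sum_(i < k.+1)
    (ifact i * X ^+ i) * (ifact (k - i) * Y ^+ (k - i)).
  apply: eq_bigr => k _; rewrite addrC (exprDn_comm _ (esym cXY)) mulr_sumr.
  apply: eq_bigr => i _; have ik : (i <= k)%N by rewrite -ltnS.
  rewrite -mulr_natl mulrA ifact_bin // (commrX _ (commr_sym (commrX _ cXY))).
  by rewrite /ifact scalMA scalM.
apply: (@eqm_cauchy n (fun j => ifact j * X ^+ j) (fun j => ifact j * Y ^+ j)) => i;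
  apply: lvlMl; exact: lvlX1.
Qed.

Lemma expT0 n : (0 < n)%N -> expT n 0 = 1.
Proof.
case: n => // n _; rewrite /expT big_ord_recl expr0 mulr1 ifact0 big1 ?addr0 //.
by move=> i _; rewrite expr0n mulr0.
Qed.

Lemma lvl_expT_sub1 n X : (0 < n)%N -> lvl 1 X -> lvl 1 (expT n X - 1).
Proof.
case: n => // n _ hX; rewrite /expT big_ord_recl expr0 mulr1 ifact0 [1 + _]addrC addrK.
apply: lvl_sum => i _; apply/lvlMl/(lvl_le _ (lvlX1 _ hX)); exact: ltn0Sn.
Qed.

Lemma mul_expTN n X : (0 < n)%N -> lvl 1 X -> expT n X * expT n (- X) = 1 %[lvl n].
Proof.
move=> n0 hX; apply: eqm_sym; rewrite -(expT0 n0) -(subrr X).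
by apply: expTD => //; [rewrite mulrN mulNr | apply: lvlN].
Qed.

Lemma mul_expNT n X : (0 < n)%N -> lvl 1 X -> expT n (- X) * expT n X = 1 %[lvl n].
Proof. by move=> n0 /lvlN/(mul_expTN n0); rewrite opprK. Qed.

Lemma lvl_mul_sub1 P Q : lvl 1 (P - 1) -> lvl 1 (Q - 1) -> lvl 1 (P * Q - 1).
Proof.
move=> hP hQ1; have -> : P * Q - 1 = (P - 1) * Q + (Q - 1).
  by rewrite mulrBl mul1r addrA subrK.
by apply: lvlD => //; apply: lvlMr.
Qed.

Lemma eqm_near1_mull j E d : lvl 1 (E - 1) -> lvl j d -> E * d = d %[lvl j.+1].
Proof. by move=> hE hd; rewrite /eqm -{2}[d]mul1r -mulrBl -add1n; apply: lvlM. Qed.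

Lemma eqm_near1_mulr j E d : lvl 1 (E - 1) -> lvl j d -> d * E = d %[lvl j.+1].
Proof. by move=> hE hd; rewrite /eqm -{2}[d]mulr1 -mulrBr -addn1; apply: lvlM. Qed.

Lemma exprD_small k i X D : (0 < i)%N -> lvl 1 X -> lvl i D ->
  (X + D) ^+ k = X ^+ k + (if k == 1%N then D else 0) %[lvl i.+1].
Proof.
move=> i0 hX hD; elim: k => [|k IH]; first by rewrite !expr0 addr0; apply: eqm_refl.
rewrite exprSr; apply: eqm_trans (eqmMr _ IH) _.
case: k IH => [|k] _; first by rewrite expr0 addr0 mul1r expr1; apply: eqm_refl.
rewrite !eqSS /= addr0 mulrDl mulrDr -exprSr -addrA; apply: eqm_addr.
apply: lvlD; first by apply: lvl_le (lvlM (lvlX1 _ hX) hD); rewrite addSn ltnS leq_addl.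
case: (k == 0%N); last by rewrite mul0r; apply: lvl_zero.
by rewrite mulrDr; apply: lvlD; [rewrite -addn1; apply: lvlM | apply: lvl_sq].
Qed.

Lemma expTD_small n i X D : (0 < i)%N -> (1 < n)%N -> lvl 1 X -> lvl i D ->
  expT n (X + D) = expT n X + D %[lvl i.+1].
Proof.
move=> i0 n1 hX hD; rewrite /expT.
have e : \sum_(k < n) ifact k * (X + D) ^+ k = \sum_(k < n) ifact k *
    (X ^+ k + (if k == 1%N :> nat then D else 0)) %[lvl i.+1].
  by apply: eqm_sum => k _; apply/eqmMl/exprD_small.
apply: eqm_trans e _; rewrite (eq_bigr _ (fun k _ => mulrDr _ _ _)) big_split /=.
apply: eqmD; first exact: eqm_refl.
rewrite (bigD1 (Ordinal n1)) //= ifact1 mul1r big1 ?addr0; first exact: eqm_refl.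
by move=> k /negbTE; rewrite -val_eqE /= => ->; rewrite mulr0.
Qed.

Lemma expT_eqm n X Y : (1 < n)%N -> lvl 1 X -> X = Y %[lvl n] ->
  expT n X = expT n Y %[lvl n].
Proof.
move=> n1 hX /eqm_sym hXY; have := expTD_small (ltnW n1) n1 hX hXY.
rewrite addrC subrK => /(eqm_le (leqnSn n)) e; apply: eqm_sym (eqm_trans e _).
exact: eqm_addr.
Qed.

Lemma expT_inj n j X Y : (1 < n)%N -> lvl 1 X -> lvl 1 Y ->
  expT n X = expT n Y %[lvl j] -> X = Y %[lvl j].
Proof.
move=> n1 hX hY he; suff : forall i, (i <= j)%N -> X = Y %[lvl i] by apply.
elim=> [|[|i] IH] ij; [exact: lvl0 | exact: lvlB |].
have /eqm_sym hD : X = Y %[lvl i.+1] by apply/IH/ltnW.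
have := expTD_small (ltn0Sn i) n1 hX hD; rewrite addrC subrK => e.
have := eqm_trans (eqm_le ij he) e.
by rewrite /eqm opprD addrA subrr add0r opprB.
Qed.

Lemma lvl_add_of_expT_mul n j X Y : (1 < n)%N -> (j <= n)%N -> lvl 1 X -> lvl 1 Y ->
  expT n X * expT n Y = 1 %[lvl j] -> lvl j (X + Y).
Proof.
move=> n1 jn hX hY e; have n0 := ltnW n1.
suff : expT n X = expT n (- Y) %[lvl j].
  by move/(expT_inj n1 hX (lvlN hY)); rewrite /eqm opprK.
have := eqmMr (expT n (- Y)) e; rewrite -mulrA mul1r; apply: eqm_trans.
by rewrite -[X in X = _ %[lvl _]]mulr1; apply/eqmMl/(eqm_le jn)/eqm_sym/mul_expTN.
Qed.

Lemma filtr_expT_tail N a z p : (1 < N)%N -> lvl 1 a -> F p (a z) ->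
  F p.+1 ((expT N a - 1 - a) z).
Proof.
move=> N1 ha hz; rewrite /expT -(subnKC N1) !big_ord_recl expr0 expr1 mulr1.
rewrite ifact0 ifact1 mul1r [1 + _]addrC addrK [a + _]addrC addrK fop_sumE.
apply: big_ind => [|x y|i _]; [exact: filtr0 | exact: filtrD |].
rewrite fop_mulE scalE; apply: filtrZ; rewrite exprSr fop_mulE.
rewrite lift0; apply: (filtr_le _ (lvlX1 i.+1 ha hz)).
by rewrite addnS ltnS leq_addr.
Qed.

Definition logT n (g : fop) :=
  \sum_(1 <= k < n) scal ((-1) ^+ k.+1 / k%:R) * (g - 1) ^+ k.

Lemma logT_small n j g : (0 < j)%N -> (1 < n)%N -> lvl j (g - 1) ->
  logT n g = g - 1 %[lvl j.+1].
Proof.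
move=> j0 n1 hg; rewrite /logT -(subnKC n1) big_nat_recl //=.
rewrite expr1 expr2 mulN1r opprK invr1 mulr1 scal1 mul1r; apply: eqm_addr.
rewrite big_nat; apply: lvl_sum => k /andP[k1 _]; apply: lvlMl.
apply: lvl_le (lvlX k.+1 hg).
by rewrite mulnS -{1}[j]addn0 ltn_add2l muln_gt0 j0.
Qed.

Lemma expT_conj n P Q X : P * Q = 1 %[lvl n] -> Q * P = 1 %[lvl n] ->
  P * expT n X * Q = expT n (P * X * Q) %[lvl n].
Proof.
move=> hPQ hQP.
have conjX k : P * X ^+ k * Q = (P * X * Q) ^+ k %[lvl n].
  elim: k => [|k IH]; first by rewrite mulr1 expr0.
  rewrite [in X in _ = X %[lvl _]]exprSr; apply: eqm_trans (eqmMr _ IH).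
  have -> : P * X ^+ k * Q * (P * X * Q) = P * (X ^+ k * (Q * P)) * X * Q.
    by rewrite !mulrA.
  rewrite exprSr mulrA; do 2 apply: eqmMr; apply: eqmMl.
  by rewrite -{1}[X ^+ k]mulr1; apply: eqmMl; apply: eqm_sym.
rewrite /expT mulr_sumr mulr_suml; apply: eqm_sum => k _.
by rewrite mulrA -scalC -!mulrA; apply: eqmMl; rewrite !mulrA; apply: conjX.
Qed.

Definition ad (X Y : fop) := X * Y - Y * X.

Lemma exprM_ad k X Y :
  X ^+ k * Y = \sum_(i < k.+1) (iter i (ad X) Y * X ^+ (k - i)) *+ 'C(k, i).
Proof.
elim: k => [|k IH]; first by rewrite big_ord1 expr0 mulr1 mul1r.
rewrite exprS -mulrA IH mulr_sumr.
have step (i : 'I_k.+1) : X * ((iter i (ad X) Y * X ^+ (k - i)) *+ 'C(k, i)) =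
    (iter i.+1 (ad X) Y * X ^+ (k - i)) *+ 'C(k, i)
    + (iter i (ad X) Y * X ^+ (k.+1 - i)) *+ 'C(k, i).
  have ik : (i <= k)%N by rewrite -ltnS.
  rewrite mulrnAr -mulrnDl subSn // exprS /= /ad; congr (_ *+ _).
  by rewrite [_ * (X * _)]mulrA -mulrDl subrK mulrA.
rewrite (eq_bigr _ (fun i _ => step i)) big_split /= [in RHS]big_ord_recl subn0.
rewrite [in RHS](eq_bigr (fun i : 'I_k.+1 =>
    iter i.+1 (ad X) Y * X ^+ (k - i) *+ 'C(k, i)
    + iter i.+1 (ad X) Y * X ^+ (k - i) *+ 'C(k, i.+1))); last first.
  by move=> i _; rewrite lift0 subSS binS mulrnDr addrC.
rewrite big_split /= addrCA; congr (_ + _).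
rewrite big_ord_recl /= subn0 !bin0; congr (_ + _).
rewrite [in RHS]big_ord_recr /= bin_small // mulr0n addr0.
by apply: eq_bigr => i _; rewrite add0n -[bump 0 i]/i.+1 subSS.
Qed.

Lemma lvl_iter_ad i X Y : lvl 1 X -> lvl i (iter i (ad X) Y).
Proof.
move=> hX; elim: i => [|i IH]; first exact: lvl0.
by rewrite /= /ad -addn1 addnC; apply: lvlB; [apply: lvlM | rewrite addnC; apply: lvlM].
Qed.

Lemma expT_conj_ad n X Y : (0 < n)%N -> lvl 1 X ->
  expT n X * Y * expT n (- X) = \sum_(i < n) ifact i * iter i (ad X) Y %[lvl n].
Proof.
move=> n0 hX; set adY := \sum_(i < n) _.
have eY : expT n X * Y = adY * expT n X %[lvl n].
  have -> : expT n X * Y = \sum_(k < n) \sum_(i < k.+1)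
      (ifact i * iter i (ad X) Y) * (ifact (k - i) * X ^+ (k - i)).
    rewrite /expT mulr_suml; apply: eq_bigr => k _.
    rewrite -mulrA exprM_ad mulr_sumr; apply: eq_bigr => i _.
    have ik : (i <= k)%N by rewrite -ltnS.
    by rewrite -mulr_natl mulrA ifact_bin // /ifact scalMA scalM.
  apply: (@eqm_cauchy n (fun j => ifact j * iter j (ad X) Y)
                        (fun j => ifact j * X ^+ j)) => i;
    apply: lvlMl; [exact: lvl_iter_ad | exact: lvlX1].
apply: eqm_trans (eqmMr _ eY) _.
by rewrite -mulrA -[adY in _ = adY %[lvl _]]mulr1; apply/eqmMl/mul_expTN.
Qed.

Definition fsubmod (W : fop -> Prop) :=
  [/\ W 0, forall a b, W a -> W b -> W (a + b) & forall r a, W a -> W (scal r * a)].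

Lemma fsubmod_lvl k : fsubmod (lvl k).
Proof. by split=> [|a b|r a]; [apply: lvl_zero | apply: lvlD | apply: lvlMl]. Qed.

Section Submodule.
Variable W : fop -> Prop.
Hypothesis hW : fsubmod W.

Lemma fsubmod0 : W 0. Proof. by case: hW. Qed.
Lemma fsubmodD a b : W a -> W b -> W (a + b). Proof. by case: hW => _ h _; apply: h. Qed.
Lemma fsubmodZ r a : W a -> W (scal r * a). Proof. by case: hW => _ _; apply. Qed.
Lemma fsubmodN a : W a -> W (- a).
Proof. by move/(fsubmodZ (-1)); rewrite scalN scal1 mulN1r. Qed.
Lemma fsubmod_sum I (r : seq I) (P : pred I) (f : I -> fop) :
  (forall i, P i -> W (f i)) -> W (\sum_(i <- r | P i) f i).
Proof. by move=> h; apply: big_ind => //; [apply: fsubmod0 | apply: fsubmodD]. Qed.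

Lemma horner_nat (p : {poly fop}) (t : nat) :
  p.[t%:R] = \sum_(e < size p) scal ((t%:R : R) ^+ e) * p`_e.
Proof. by rewrite horner_coef; apply: eq_bigr => e _; rewrite -scal_natX scalC. Qed.

Lemma fsubmod_horner (p : {poly fop}) (t : nat) : (forall d, W p`_d) -> W p.[t%:R].
Proof. by move=> h; rewrite horner_nat; apply: fsubmod_sum => e _; apply: fsubmodZ. Qed.

(* Lagrange interpolation at the nodes 0, 1, ..., size p - 1, whose
   differences are invertible since Q is contained in R. *)
Lemma fsubmod_coef (p : {poly fop}) :
  (forall t : nat, (t < size p)%N -> W p.[t%:R]) -> forall d, W p`_d.
Proof.
move=> hp d; set D := size p.
have [dD | /(nth_default 0) -> //] := ltnP d D; last exact: fsubmod0.
pose V := Vandermonde D (\row_(j < D) (j : nat)%:R : 'rV[R]_D).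
have V_unit : V \in unitmx.
  rewrite unitmxE det_Vandermonde; apply: unitr_prod => i _.
  apply: unitr_prod => j ij; rewrite !mxE -natrB ?natr_unit ?subn_gt0 //.
  exact: ltnW.
set d0 := Ordinal dD.
have inv_coef (e : 'I_D) :
    \sum_(t < D) (t%:R : R) ^+ e * invmx V t d0 = (e == d0)%:R.
  have := congr1 (fun A : 'M[R]_D => A e d0) (mulmxV V_unit); rewrite !mxE => <-.
  by apply: eq_bigr => t _; rewrite !mxE.
have -> : p`_d = \sum_(t < D) scal (invmx V t d0) * p.[(t : nat)%:R].
  under eq_bigr do rewrite horner_nat mulr_sumr.
  rewrite exchange_big /=.
  under eq_bigr do rewrite (eq_bigr _ (fun t _ => mulrA _ _ _)) -mulr_suml.
  under eq_bigr do rewrite (eq_bigr _ (fun t _ => esym (scalM _ _))) -scal_sum.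
  under eq_bigr do rewrite (eq_bigr _ (fun t _ => mulrC _ _)) inv_coef.
  rewrite (bigD1 d0) //= eqxx scal1 mul1r big1 ?addr0 // => e /negbTE ->.
  by rewrite scal0 mul0r.
by apply: fsubmod_sum => t _; apply/fsubmodZ/hp.
Qed.

Lemma fsubmod_coef_dilation (p : {poly fop}) : W p`_1 ->
  (forall t : nat, W (p.[(t + t)%:R] - (p.[t%:R] + p.[t%:R]))) -> forall d, W p`_d.
Proof.
move=> W1 hp d; pose c e := (2%:R : R) ^+ e - 2%:R.
set q := \poly_(e < size p) (scal (c e) * p`_e).
have qE (t : nat) : q.[t%:R] = p.[(t + t)%:R] - (p.[t%:R] + p.[t%:R]).
  rewrite horner_poly !horner_nat -big_split -sumrB /=; apply: eq_bigr => e _.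
  rewrite -scal_natX -mulrA -scalC mulrA -scalM -!mulrDl -scalD -mulrBl -scalN -scalD.
  have -> : ((t + t)%:R : R) = 2%:R * t%:R by rewrite mulr_natl mulr2n natrD.
  by congr (scal _ * _); rewrite exprMn /c mulrBl mulr_natl mulr2n.
have Wq : forall e, W q`_e by apply: fsubmod_coef => t _; rewrite qE.
have [dp | /(nth_default 0) -> //] := ltnP d (size p); last exact: fsubmod0.
case: d dp => [|[|d]] dp //.
  have := fsubmodN (Wq 0%N); rewrite coef_poly dp /c expr0.
  by rewrite -mulNr -scalN opprB mulr2n addrK scal1 mul1r.
have c_unit : c d.+2 \is a GRing.unit.
  have lt2 : (2 < 2 ^ d.+2)%N.
    by rewrite !expnS mulnA (@leq_trans (2 * 2)) // leq_pmulr // expn_gt0.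
  by rewrite /c -natrX -natrB ?natr_unit ?subn_gt0 // ltnW.
have := fsubmodZ (c d.+2)^-1 (Wq d.+2).
by rewrite coef_poly dp mulrA -scalM mulVr // scal1 mul1r.
Qed.

End Submodule.

Definition up_to (W : fop -> Prop) k x := exists y, W y /\ x = y %[lvl k].

Lemma fsubmod_up_to W k : fsubmod W -> fsubmod (up_to W k).
Proof.
move=> hW; split=> [|a b [a' [Wa ea]] [b' [Wb eb]]|r a [a' [Wa ea]]].
- by exists 0; split; [apply: fsubmod0 | apply: eqm_refl].
- by exists (a' + b'); split; [apply: fsubmodD | apply: eqmD].
- by exists (scal r * a'); split; [apply: fsubmodZ | apply: eqmMl].
Qed.

Lemma commute_near_one j P e : lvl 1 (P - 1) -> lvl j e ->
  e * P = P * e %[lvl j.+1].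
Proof.
by move=> hP he; apply: eqm_trans (eqm_near1_mulr hP he) (eqm_sym (eqm_near1_mull hP he)).
Qed.

Lemma eqm_mul_one_add j Y u v : (0 < j)%N -> lvl j u -> lvl j v ->
  Y * (1 + u) = 1 + v %[lvl j.+1] -> Y = 1 + (v - u) %[lvl j.+1].
Proof.
move=> j0 hu hv hY.
have Y1 : Y = Y * (1 + u) * (1 - u) %[lvl j.+1].
  rewrite -mulrA mulrDl mul1r mulrBr mulr1 addrA subrK mulrBr mulr1.
  by apply/eqm_sym/eqm_addr/lvlN/lvlMl/lvl_sq.
apply: eqm_trans Y1 (eqm_trans (eqmMr _ hY) _).
have -> : (1 + v) * (1 - u) = 1 + (v - u) - v * u.
  by rewrite mulrBr mulr1 mulrDl mul1r opprD !addrA.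
by apply/eqm_addr/lvlN/(lvl_le _ (lvlM hv hu)); rewrite -addn1 leq_add2l.
Qed.

Definition expP n (p : {poly fop}) := \sum_(k < n) (ifact k)%:P * p ^+ k.

Lemma horner_nat_mul (p q : {poly fop}) (t : nat) :
  (p * q).[t%:R] = p.[t%:R] * q.[t%:R].
Proof. by apply/hornerM_comm; rewrite /comm_poly; apply/esym/commr_nat. Qed.

Lemma horner_expP n (p : {poly fop}) (t : nat) : (expP n p).[t%:R] = expT n p.[t%:R].
Proof.
rewrite /expP horner_sum; apply: eq_bigr => k _.
by rewrite horner_nat_mul hornerC horner_exp_comm //; apply/esym/commr_nat.
Qed.

Lemma coef0M (p q : {poly fop}) : (p * q)`_0 = p`_0 * q`_0.
Proof. by rewrite coefM big_ord1. Qed.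
Lemma coef1M (p q : {poly fop}) : (p * q)`_1 = p`_0 * q`_1 + p`_1 * q`_0.
Proof. by rewrite coefM big_ord_recl big_ord1. Qed.

Lemma coef_expP n (p : {poly fop}) : p`_0 = 0 -> (1 < n)%N ->
  (expP n p)`_0 = 1 /\ (expP n p)`_1 = p`_1.
Proof.
move=> p0 n1; have p0X k : (p ^+ k.+1)`_0 = 0 by rewrite exprS coef0M p0 mul0r.
have p1X k : (p ^+ k.+2)`_1 = 0 by rewrite exprS coef1M p0 p0X mul0r mulr0 addr0.
rewrite /expP -(subnKC n1) !coef_sum !big_ord_recl !coefCM /=.
rewrite !expr0 expr1 coef1 mulr1 ifact0 ifact1 !mul1r p0 add0r coef1 add0r.
by split; rewrite big1 ?addr0 // => i _; rewrite coefCM ?p0X ?p1X mulr0.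
Qed.

Section ExpLogPair.
Variables (n : nat) (TT HH : fop -> Prop).
Hypothesis n_gt1 : (1 < n)%N.
Hypothesis TT_submod : fsubmod TT.
Hypothesis TT_lvl1 : forall a, TT a -> lvl 1 a.
Hypothesis HH_mul : forall g h, HH g -> HH h -> HH (g * h).
Hypothesis exp_approx : forall a, TT a -> exists2 h, HH h & h = expT n a %[lvl n].
Hypothesis log_approx : forall h, HH h -> exists2 a, TT a & a = logT n h %[lvl n].

Let n_gt0 : (0 < n)%N := ltnW n_gt1.

Lemma log_near_one j h : (0 < j)%N -> (j < n)%N -> HH h -> lvl j (h - 1) ->
  up_to TT j.+1 (h - 1).
Proof.
move=> j0 jn Hh hh; have [a Ta ea] := log_approx Hh; exists a; split=> //.
exact/eqm_sym/(eqm_trans (eqm_le jn ea))/logT_small.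
Qed.

Section Correction.
Variables xi eta : fop.
Hypothesis xi_lvl1 : lvl 1 xi.
Hypothesis TT_ad : forall y, TT y -> TT (ad xi y).
Hypothesis TT_eta : TT eta.

Definition bchP := expP n (- (xi%:P * 'X)) * expP n ((xi + eta)%:P * 'X).

Lemma horner_bchP (t : nat) :
  bchP.[t%:R] = expT n (- (xi * t%:R)) * expT n ((xi + eta) * t%:R).
Proof. by rewrite horner_nat_mul !horner_expP hornerN !hornerMX !hornerC. Qed.

Lemma bchP_coef : bchP`_0 = 1 /\ bchP`_1 = eta.
Proof.
have h1 : (- (xi%:P * 'X))`_0 = 0 by rewrite coefN coefMX oppr0.
have h2 : ((xi + eta)%:P * 'X)`_0 = 0 by rewrite coefMX.
have [e10 e11] := coef_expP h1 n_gt1; have [e20 e21] := coef_expP h2 n_gt1.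
rewrite /bchP coef0M coef1M e10 e11 e20 e21 coefN !coefMX !coefC /=.
rewrite mulr1 mul1r; split=> //.
(* The remaining product is typed through [reverse_coercion], which blocks
   [rewrite mulr1]; conversion still sees through it. *)
have E : xi + eta + - xi * 1 = eta by rewrite mulr1 [xi + eta]addrC addrK.
exact: E.
Qed.

Definition admissible (a : {poly fop}) := [/\ a`_0 = 0, a`_1 = eta & forall d, TT a`_d].

Definition approx j a :=
  admissible a /\ forall s : nat, bchP.[s%:R] = expT n a.[s%:R] %[lvl j].

Definition err a := expP n (- a) * bchP - 1.

Lemma horner_err a (t : nat) :
  (err a).[t%:R] = expT n (- a.[t%:R]) * bchP.[t%:R] - 1.
Proof. by rewrite hornerD hornerN hornerC horner_nat_mul horner_expP hornerN. Qed.

Lemma err_coef01 a : admissible a -> (err a)`_0 = 0 /\ (err a)`_1 = 0.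
Proof.
case=> a0 a1 _; have na0 : (- a)`_0 = 0 by rewrite coefN a0 oppr0.
have [e0 e1] := coef_expP na0 n_gt1; have [C0 C1] := bchP_coef.
rewrite /err !coefB coef0M coef1M e0 e1 C0 C1 coefN a1 !coef1 /=.
by rewrite !(mul1r, mulr1) subrr addrN subr0.
Qed.

Lemma admissible_TT a : admissible a -> forall d, TT a`_d.
Proof. by case. Qed.

Lemma admissible_lvl1 a (s : nat) : admissible a -> lvl 1 a.[s%:R].
Proof. by move/admissible_TT => Ta; apply: TT_lvl1; exact: fsubmod_horner. Qed.

Lemma bchP_exp_err a (s : nat) : admissible a ->
  bchP.[s%:R] = expT n a.[s%:R] * (1 + (err a).[s%:R]) %[lvl n].
Proof.
move=> ha; rewrite horner_err addrC subrK mulrA -{1}[bchP.[_]]mul1r.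
exact/eqmMr/eqm_sym/mul_expTN/admissible_lvl1.
Qed.

Lemma lvl_err j a (s : nat) : (j <= n)%N -> approx j a -> lvl j (err a).[s%:R].
Proof.
move=> jn [ha hC]; rewrite horner_err; apply: eqm_trans (eqmMl _ (hC s)) _.
exact/(eqm_le jn)/mul_expNT/admissible_lvl1.
Qed.

Lemma ad_scale_nat (t : nat) y : ad (xi * t%:R) y = scal t%:R * ad xi y.
Proof.
apply: fopP => x; rewrite /ad !(fop_subE, fop_mulE) -scal_nat !scalE.
by rewrite !fopZ scalerBr.
Qed.

Lemma TT_iter_ad_neg (t : nat) i y : TT y -> TT (iter i (ad (- (xi * t%:R))) y).
Proof.
move=> Ty; elim: i => [|i IH] //=.
have -> : forall z, ad (- (xi * t%:R)) z = - ad (xi * t%:R) z.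
  by move=> z; rewrite /ad mulNr mulrN opprK addrC opprB.
by rewrite ad_scale_nat -mulNr -scalN; apply: (fsubmodZ TT_submod); apply: TT_ad.
Qed.

Lemma bchP_double (t : nat) : bchP.[(t + t)%:R] =
  expT n (- (xi * t%:R)) * bchP.[t%:R] * expT n (xi * t%:R) * bchP.[t%:R] %[lvl n].
Proof.
have lX : lvl 1 (xi * t%:R) by apply: lvlMr.
have lT : lvl 1 ((xi + eta) * t%:R) by apply/lvlMr/lvlD => //; apply: TT_lvl1.
rewrite !horner_bchP natrD !mulrDr opprD.
apply: eqm_trans (eqmM (expTD _ _ (lvlN lX) (lvlN lX)) (expTD _ _ lT lT)) _ => //.
set P := expT n _; set Q := expT n (xi * _); set E := expT n _.
have -> : P * (P * E) * Q * (P * E) = P * P * E * (Q * P) * E by rewrite !mulrA.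
rewrite -!mulrA; do 3 apply: eqmMl.
by rewrite -{1}[E]mul1r mulrA; apply: eqmMr; apply/eqm_sym/mul_expTN.
Qed.

Lemma conj_exp_approx (t : nat) al be : TT al -> TT be ->
  exists2 h, HH h & expT n (- be) * expT n (- (xi * t%:R)) * expT n al
                    * expT n (xi * t%:R) * expT n al = h %[lvl n].
Proof.
move=> Tal Tbe; set X := xi * t%:R; have lX : lvl 1 X by apply: lvlMr.
set al' := \sum_(i < n) ifact i * iter i (ad (- X)) al.
have Tal' : TT al'.
  by apply: (fsubmod_sum TT_submod) => i _; apply: (fsubmodZ TT_submod); apply: TT_iter_ad_neg.
have conj : expT n (- X) * expT n al * expT n X = expT n al' %[lvl n].
  apply: eqm_trans (expT_conj _ (mul_expNT n_gt0 lX) (mul_expTN n_gt0 lX)) _.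
  apply: expT_eqm => //; first by apply/lvlMr/lvlMl/TT_lvl1.
  by have := expT_conj_ad al n_gt0 (lvlN lX); rewrite opprK.
have [hb Hb eb] := exp_approx (fsubmodN TT_submod Tbe).
have [ha' Ha' ea'] := exp_approx Tal'.
have [ha Ha ea] := exp_approx Tal.
exists (hb * ha' * ha); first by apply: HH_mul => //; apply: HH_mul.
have -> : expT n (- be) * expT n (- X) * expT n al * expT n X * expT n al =
    expT n (- be) * (expT n (- X) * expT n al * expT n X) * expT n al.
  by rewrite !mulrA.
by apply: eqmM; [apply: eqmM; [apply: eqm_sym | apply/(eqm_trans conj)/eqm_sym] |
                 apply: eqm_sym].
Qed.

(* Conjugation by exp(-t xi) maps TT into itself up to End^(n), since
   [xi, TT] is contained in TT; so by the doubling formula for C the error is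
   additive in t up to the logarithm of an element of HH. *)
Lemma err_double j a (t : nat) : (0 < j)%N -> (j < n)%N -> approx j a ->
  up_to TT j.+1 ((err a).[(t + t)%:R] - ((err a).[t%:R] + (err a).[t%:R])).
Proof.
move=> j0 jn ha; have [adm _] := ha.
set X := xi * t%:R; set al := a.[t%:R]; set be := a.[(t + t)%:R].
set e1 := (err a).[t%:R]; set e2 := (err a).[(t + t)%:R].
set P := expT n (- X); set Q := expT n X; set h1 := expT n al.
have le1 : lvl j e1 by apply: lvl_err (ltnW jn) ha.
have le2 : lvl j e2 by apply: lvl_err (ltnW jn) ha.
have e2E : 1 + e2 = expT n (- be) * (P * (h1 * (1 + e1)) * Q * (h1 * (1 + e1))) %[lvl n].
  rewrite /e2 horner_err addrC subrK; apply/eqmMl/(eqm_trans (bchP_double t)).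
  by have C1 := bchP_exp_err t adm; apply: eqmM => //; apply/eqmMr/eqmMl.
have commute : (1 + e1) * (Q * h1) = (Q * h1) * (1 + e1) %[lvl j.+1].
  rewrite mulrDl mulrDr mul1r mulr1; apply/eqmD/commute_near_one => //.
    exact: eqm_refl.
  by apply: lvl_mul_sub1; apply: lvl_expT_sub1 => //; [apply: lvlMr | apply: admissible_lvl1].
set Y := expT n (- be) * P * h1 * Q * h1.
have hY : Y * (1 + (e1 + e1)) = 1 + e2 %[lvl j.+1].
  apply/eqm_sym/(eqm_trans (eqm_le jn e2E)).
  rewrite !mulrA -[_ * (1 + e1) * Q * h1]mulrA -[_ * (1 + e1) * (Q * h1)]mulrA.
  apply: eqm_trans (eqmMr _ (eqmMl _ commute)) _.
  have -> : expT n (- be) * P * h1 * (Q * h1 * (1 + e1)) * (1 + e1) =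
      Y * ((1 + e1) * (1 + e1)) by rewrite /Y !mulrA.
  apply: eqmMl; rewrite mulrDr mulr1 mulrDl mul1r !addrA.
  by apply/eqm_addr/lvl_sq.
have [hh Hh eh] := conj_exp_approx t (fsubmod_horner TT_submod t (admissible_TT adm))
  (fsubmod_horner TT_submod (t + t) (admissible_TT adm)).
have Y1 := eqm_mul_one_add j0 (lvlD le1 le1) le2 hY.
have hh1 : hh - 1 = e2 - (e1 + e1) %[lvl j.+1].
  have := eqmB (eqm_trans (eqm_sym (eqm_le jn eh)) Y1) (eqm_refl _ 1).
  by rewrite [1 + _]addrC addrK.
have lhh : lvl j (hh - 1).
  by apply: eqm_lvl (eqm_le (leqnSn j) hh1) (lvlB le2 (lvlD le1 le1)).
have [y [Ty ey]] := log_near_one j0 jn Hh lhh.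
by exists y; split=> //; apply: eqm_trans (eqm_sym hh1) ey.
Qed.

Lemma err_correction j a : (0 < j)%N -> (j < n)%N -> approx j a ->
  exists b : {poly fop},
    [/\ b`_0 = 0, b`_1 = 0, forall d, TT b`_d & forall d, (err a)`_d = b`_d %[lvl j.+1]].
Proof.
move=> j0 jn ha; have [e0 e1] := err_coef01 (proj1 ha).
have We : forall d, up_to TT j.+1 (err a)`_d.
  apply: (fsubmod_coef_dilation (fsubmod_up_to j.+1 TT_submod)) => [|t].
    by rewrite e1; apply: fsubmod0; apply: fsubmod_up_to.
  exact: err_double.
have [b hb] := choice We.
exists (\poly_(d < size (err a)) (if (1 < d)%N then b d else 0)).
split=> [||d|d]; rewrite coef_poly.
- by case: ifP.
- by case: ifP.
- case: ifP => _; last exact: fsubmod0.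
  by case: ifP => _; [case: (hb d) | apply: fsubmod0].
- case: ltnP => hd; last by rewrite nth_default //; apply: eqm_refl.
  case: ifP => d1; first by case: (hb d).
  by case: d d1 hd => [|[|]] // _ _; rewrite ?e0 ?e1; apply: eqm_refl.
Qed.

Lemma approx_succ j a : (0 < j)%N -> (j < n)%N -> approx j a ->
  exists a', approx j.+1 a'.
Proof.
move=> j0 jn ha; have [adm _] := ha.
have [b [b0 b1 Tb eb]] := err_correction j0 jn ha.
have le d : lvl j (err a)`_d.
  by apply: (fsubmod_coef (fsubmod_lvl j)) => t _; apply: lvl_err (ltnW jn) ha.
exists (a + b); split.
  case: adm => a0 a1 Ta; split; rewrite ?coefD ?a0 ?a1 ?b0 ?b1 ?addr0 // => d.
  by rewrite coefD; apply: (fsubmodD TT_submod).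
move=> s; rewrite hornerD; set al := a.[s%:R]; set bs := b.[s%:R].
have lbs : lvl j bs.
  apply: (fsubmod_horner (fsubmod_lvl j)) => d.
  exact: eqm_lvl (eqm_sym (eqm_le (leqnSn j) (eb d))) (le d).
have ebs : (err a).[s%:R] = bs %[lvl j.+1].
  rewrite /eqm -hornerN -hornerD; apply: (fsubmod_horner (fsubmod_lvl _)) => d.
  by rewrite coefD coefN; apply: eb.
apply: eqm_trans (eqm_le jn (bchP_exp_err s adm)) _.
apply: eqm_trans (eqmMl _ (eqmD (eqm_refl _ 1) ebs)) _.
have hbs : expT n al * bs = bs %[lvl j.+1].
  by apply: eqm_near1_mull lbs; apply/lvl_expT_sub1/admissible_lvl1.
rewrite mulrDr mulr1; apply: eqm_trans (eqmD (eqm_refl _ _) hbs) _.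
by apply/eqm_sym/expTD_small => //; apply: admissible_lvl1.
Qed.

Lemma approx_full : exists a, approx n a.
Proof.
suff : forall j, (0 < j)%N -> (j <= n)%N -> exists a, approx j a by apply.
elim=> [//|[|j] IH] _ jn; last first.
  by have [a ha] := IH (ltn0Sn j) (ltnW jn); apply: approx_succ ha.
exists (eta%:P * 'X); split.
  split=> [||d]; rewrite coefMX ?coefC //.
  by case: (d == 0%N); [apply: fsubmod0 | case: (d.-1 == 0%N); [| apply: fsubmod0]].
move=> s; rewrite horner_bchP hornerMX hornerC.
have lT : lvl 1 ((xi + eta) * s%:R) by apply/lvlMr/lvlD => //; apply: TT_lvl1.
apply: (@eqm_trans _ _ 1).
  by apply: lvl_mul_sub1; apply: lvl_expT_sub1 => //; apply/lvlN/lvlMr.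
by apply/eqm_sym/lvl_expT_sub1 => //; apply/lvlMr/TT_lvl1.
Qed.

Lemma exp_bch : exists2 a, TT a & expT n (- xi) * expT n (xi + eta) = expT n a %[lvl n].
Proof.
have [a [adm ha]] := approx_full; exists a.[1%:R].
  by apply: (fsubmod_horner TT_submod); apply: admissible_TT.
by have := ha 1%N; rewrite horner_bchP !mulr1.
Qed.

End Correction.
End ExpLogPair.

Lemma End_i_fop k f : End_i F k f -> exists2 a : fop, fop_fun a = f & lvl k a.
Proof.
case=> hl hk; have hf : filtered_linear f.
  by split=> // j x /hk; apply: filtr_le; rewrite leq_addr.
by exists (Fop hf).
Qed.

Section Realization.
Variables T S : (M -> M) -> Prop.
Hypothesis hT : submod1 F T.
Hypothesis hS : subgroup1 F S.
Hypothesis hE : exp_ln_realized F T S.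

Definition Tf (a : fop) := T a.
Definition Sf (a : fop) := S a.

Lemma Tf_submod : fsubmod Tf.
Proof. by case: hT => _ T0 TD TZ; split=> [|a b|r a]; [apply: T0 | apply: TD | apply: TZ]. Qed.

Lemma Tf_lvl1 a : Tf a -> lvl 1 a.
Proof. by case: hT => h _ _ _ /h []. Qed.

Lemma Tf_lift f : T f -> exists2 a : fop, fop_fun a = f & Tf a.
Proof.
case: hT => h _ _ _ Tf'; have [a af _] := End_i_fop (h _ Tf').
by exists a; rewrite // /Tf af.
Qed.

Lemma Sf_lift f : S f ->
  exists a b : fop, [/\ fop_fun a = f, Sf a, Sf b, a * b = 1 & b * a = 1].
Proof.
case: hS => hGL _ _ hinv Sf'; have [g' [fK gK lin [fF gF] [_ [lin' _]]]] := hGL _ Sf'.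
have hg' : filtered_linear g'.
  split=> // r x y; move: (lin' r x y) => /eqP; rewrite subr_eq => /eqP ->.
  by rewrite scalerBr addrACA !subrK.
exists (Fop (conj lin fF)), (Fop hg'); split=> //; first exact: hinv fK gK.
  by apply: fopP => x; rewrite fop_mulE /= gK.
by apply: fopP => x; rewrite fop_mulE /= fK.
Qed.

Lemma Sf_mul g h : Sf g -> Sf h -> Sf (g * h).
Proof. by case: hS => _ _ hM _; apply: hM. Qed.

Lemma Sf_inv g : Sf g -> exists h, [/\ Sf h, g * h = 1 & h * g = 1].
Proof.
move=> Sg; have [a [b [ag _ Sb ab ba]]] := Sf_lift Sg.
have -> : g = a by apply: fopP => x; rewrite ag.
by exists b.
Qed.

Lemma Sf_lvl1 g : Sf g -> lvl 1 (g - 1).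
Proof.
by case: hS => hGL _ _ _ /hGL [gi [_ _ _ _ [[_ h] _]]] j x /h; rewrite fop_subE.
Qed.

(* Taking z = 0, whose order is infinite, the realization hypotheses apply at
   every truncation level. *)
Lemma Tf_exp_approx n a : (0 < n)%N -> Tf a ->
  exists2 h, Sf h & h = expT n a %[lvl n].
Proof.
case: n => // N _ Ta; have [hexp _] := hE.
have z0 m : ord_eq F (a 0) m -> (m <= N)%N by rewrite fop0 => /ord_eq_0.
have [phi [phiN Sphi _]] := hexp a 0 N Ta z0.
have [p pE lp] := End_i_fop phiN; exists (expT N.+1 a + p); last exact: eqm_addr.
congr S: Sphi; apply: funext => x; rewrite /Psi_exp fop_addE pE fop_sumE.
by congr (_ + _); apply: eq_bigr => k _; rewrite fop_mulE scalE fop_expE.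
Qed.

Lemma Sf_log_approx n g : (0 < n)%N -> Sf g ->
  exists2 a, Tf a & a = logT n g %[lvl n].
Proof.
case: n => // N _ Sg; have [_ hln] := hE.
have z0 m : ord_eq F (g 0 - 0) m -> (m <= N)%N by rewrite fop0 subrr => /ord_eq_0.
have [phi [phiN Tphi _]] := hln g 0 N Sg z0.
have [p pE lp] := End_i_fop phiN; exists (logT N.+1 g + p); last exact: eqm_addr.
congr T: Tphi; apply: funext => x; rewrite /Psi_ln fop_addE pE fop_sumE.
by congr (_ + _); apply: eq_bigr => k _; rewrite fop_mulE scalE fop_expE.
Qed.

Lemma Sf_exp_approx n g : (1 < n)%N -> Sf g -> exists2 xi, Tf xi & g = expT n xi %[lvl n].
Proof.
move=> n1 Sg; have n0 := ltnW n1.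
suff : forall j, (0 < j)%N -> (j <= n)%N -> exists2 xi, Tf xi & g = expT n xi %[lvl j].
  by move/(_ n n0 (leqnn n)).
elim=> [//|[|j] IH] _ jn.
  by exists 0; [apply: fsubmod0 Tf_submod | rewrite expT0 //; apply: Sf_lvl1].
have [xi Txi exi] := IH (ltn0Sn j) (ltnW jn).
have [gx Sgx egx] := Tf_exp_approx n0 Txi.
have [gi [Sgi gxi gix]] := Sf_inv Sgx.
have le : lvl j.+1 (g * gi - 1).
  rewrite -gxi; apply: eqmMr (eqm_trans exi (eqm_sym (eqm_le (ltnW jn) egx))).
have [xi' Txi' exi'] := Sf_log_approx n0 (Sf_mul Sg Sgi).
have xie : xi' = g * gi - 1 %[lvl j.+2].
  exact: eqm_trans (eqm_le jn exi') (logT_small (ltn0Sn j) n1 le).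
exists (xi + xi'); first by apply: (fsubmodD Tf_submod).
have lxi' : lvl j.+1 xi' by apply: eqm_lvl (eqm_le (leqnSn _) xie) le.
apply/eqm_sym/(eqm_trans (expTD_small (ltn0Sn j) n1 (Tf_lvl1 Txi) lxi')).
have -> : g = gx + (g * gi - 1) * gx by rewrite mulrBl mul1r -mulrA gix mulr1 addrC subrK.
apply: eqmD; first exact/(eqm_le jn)/eqm_sym.
exact/(eqm_trans xie)/eqm_sym/eqm_near1_mulr/le/Sf_lvl1.
Qed.

End Realization.

Section ProductOfLieType.
Variables G H TG TH : (M -> M) -> Prop.
Hypothesis sG : subgroup1 F G.
Hypothesis sH : subgroup1 F H.
Hypothesis GH_gen : forall f, gen_subgroup F G H f <-> prod_set G H f.
Hypothesis tG : submod1 F TG.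
Hypothesis tH : submod1 F TH.
Hypothesis TH_ad : forall xi eta, TG xi -> TH eta -> TH (fun x => xi (eta x) - eta (xi x)).
Hypothesis eG : exp_ln_realized F TG G.
Hypothesis eH : exp_ln_realized F TH H.

Lemma exp_sum_approx n xi eta : (1 < n)%N -> Tf TG xi -> Tf TH eta ->
  exists g h, [/\ Sf G g, Sf H h & g * h = expT n (xi + eta) %[lvl n]].
Proof.
move=> n1 Txi Teta; have n0 := ltnW n1; have lxi := Tf_lvl1 tG Txi.
have [a Ta ea] := exp_bch n1 (Tf_submod tH) (Tf_lvl1 tH) (@Sf_mul _ sH)
  (fun a => Tf_exp_approx eH n0) (fun g => Sf_log_approx eH n0) lxi
  (fun y Ty => TH_ad Txi Ty) Teta.
have [g Sg eg] := Tf_exp_approx eG n0 Txi.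
have [h Sh eh] := Tf_exp_approx eH n0 Ta.
exists g, h; split=> //; apply: eqm_trans (eqmM eg eh) _.
apply: eqm_trans (eqmMl _ (eqm_sym ea)) _.
by rewrite mulrA -[X in _ = X %[lvl _]]mul1r; apply/eqmMr/mul_expTN.
Qed.

Definition GHf (s : fop) := exists g h, [/\ Sf G g, Sf H h & s = g * h].

Lemma PS_gen (s : fop) : GHf s -> gen_subgroup F G H s.
Proof. by case=> g [h [Sg Sh ->]]; apply/GH_gen; exists g, h. Qed.

Lemma gen_PS (s : fop) : gen_subgroup F G H s -> GHf s.
Proof.
move/GH_gen => [g [h [Gg Hh sgh]]].
have [ga [_ [gaE Sga _ _ _]]] := Sf_lift sG Gg.
have [ha [_ [haE Sha _ _ _]]] := Sf_lift sH Hh.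
by exists ga, ha; split=> //; apply: fopP => x; rewrite sgh -gaE -haE.
Qed.

Lemma PS_mul s s' : GHf s -> GHf s' -> GHf (s * s').
Proof.
move=> /PS_gen hs /PS_gen hs'; apply: gen_PS => S sS SG SH.
by case: (sS) => _ _ hM _; apply: hM; [apply: hs | apply: hs'].
Qed.

Lemma PS_inv s s' : GHf s -> s * s' = 1 -> s' * s = 1 -> GHf s'.
Proof.
move=> /PS_gen hs ss' s's; apply: gen_PS => S sS SG SH.
case: (sS) => _ _ _ hI; apply: hI (hs S sS SG SH) _ _ => x.
  by have := congr1 (fun f : fop => f x) s's.
by have := congr1 (fun f : fop => f x) ss'.
Qed.

(* Dividing s by an element of G.H close to exp(xi + eta) leaves
   exp(xi') exp(eta') = 1 + (xi' + eta') with xi' + eta' in End^(j). *)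
Lemma prod_log_step n j s xi eta : (1 < n)%N -> (0 < j)%N -> (j < n)%N -> GHf s ->
    Tf TG xi -> Tf TH eta -> s = expT n (xi + eta) %[lvl j] ->
  exists xi' eta', [/\ Tf TG xi', Tf TH eta' & s = expT n (xi' + eta') %[lvl j.+1]].
Proof.
move=> n1 j0 jn Ps Txi Teta es; have n0 := ltnW n1.
have ltau : lvl 1 (xi + eta) by apply: lvlD; [apply: (Tf_lvl1 tG) | apply: (Tf_lvl1 tH)].
have [g0 [h0 [Sg0 Sh0 ef]]] := exp_sum_approx n1 Txi Teta.
have [gi [Sgi g1 g2]] := Sf_inv sG Sg0; have [hi [Shi h1 h2]] := Sf_inv sH Sh0.
have f1 : g0 * h0 * (hi * gi) = 1 by rewrite mulrA -(mulrA g0) h1 mulr1 g1.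
have f2 : hi * gi * (g0 * h0) = 1 by rewrite mulrA -(mulrA hi) g2 mulr1 h2.
have Pfi : GHf (hi * gi) by apply: (PS_inv (s := g0 * h0)) => //; exists g0, h0.
have [g' [h' [Sg' Sh' es']]] : GHf (hi * gi * s) by apply: PS_mul.
have [xi' Txi' exi'] := Sf_exp_approx tG sG eG n1 Sg'.
have [eta' Teta' eeta'] := Sf_exp_approx tH sH eH n1 Sh'.
have lxi' := Tf_lvl1 tG Txi'; have leta' := Tf_lvl1 tH Teta'.
have ld : lvl j (xi' + eta').
  apply: lvl_add_of_expT_mul n1 (ltnW jn) lxi' leta' _.
  apply: eqm_trans (eqm_le (ltnW jn) (eqm_sym (eqmM exi' eeta'))) _.
  rewrite -es' -f2; apply: eqmMl; apply: eqm_trans es _.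
  exact/(eqm_le (ltnW jn))/eqm_sym.
have s'E : hi * gi * s = 1 + (xi' + eta') %[lvl j.+1].
  rewrite es'; apply: eqm_trans (eqm_le jn (eqmM exi' eeta')) _.
  rewrite -{1}[eta'](addKr xi').
  apply: eqm_trans (eqmMl _ (expTD_small j0 n1 (lvlN lxi') ld)) _.
  rewrite mulrDr; apply: eqmD; first exact/(eqm_le jn)/mul_expTN.
  exact: eqm_near1_mull (lvl_expT_sub1 n0 lxi') ld.
exists (xi + xi'), (eta + eta').
split; [exact: (fsubmodD (Tf_submod tG)) | exact: (fsubmodD (Tf_submod tH)) |].
have -> : s = g0 * h0 * (hi * gi * s) by rewrite mulrA f1 mul1r.
apply: eqm_trans (eqmM (eqm_le jn ef) s'E) _; rewrite addrACA mulrDr mulr1.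
apply/eqm_sym/(eqm_trans (expTD_small j0 n1 ltau ld))/eqmD; first exact: eqm_refl.
exact/eqm_sym/eqm_near1_mull/ld/lvl_expT_sub1.
Qed.

Lemma prod_log_approx n s : (1 < n)%N -> GHf s ->
  exists xi eta, [/\ Tf TG xi, Tf TH eta & s = expT n (xi + eta) %[lvl n]].
Proof.
move=> n1 Ps; have n0 := ltnW n1; suff : forall j, (0 < j)%N -> (j <= n)%N ->
    exists xi eta, [/\ Tf TG xi, Tf TH eta & s = expT n (xi + eta) %[lvl j]].
  by move/(_ n n0 (leqnn n)).
elim=> [//|[|j] IH] _ jn.
  exists 0, 0; split; [exact: fsubmod0 (Tf_submod tG) | exact: fsubmod0 (Tf_submod tH) |].
  rewrite addr0 expT0 ?(ltnW n1) //; case: Ps => g [h [Sg Sh ->]].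
  exact: lvl_mul_sub1 (Sf_lvl1 sG Sg) (Sf_lvl1 sH Sh).
have [xi [eta [Txi Teta es]]] := IH (ltn0Sn j) (ltnW jn).
exact: prod_log_step n1 (ltn0Sn j) jn Ps Txi Teta es.
Qed.

Lemma sum_pointwise xi eta z m : TG xi -> TH eta -> ord_eq F (xi z + eta z) m ->
  exists2 f, prod_set G H f & ord_gt F (f z - z - (xi z + eta z)) m.
Proof.
move=> Txi Teta [hm _].
have [xa xaE Txa] := Tf_lift tG Txi; have [ea eaE Tea] := Tf_lift tH Teta.
have [g [h [Sg Sh egh]]] := exp_sum_approx (isT : 1 < m.+2)%N Txa Tea.
exists (g \o h); first by exists (fop_fun g), (fop_fun h).
set tau := xa + ea; have tz : tau z = xi z + eta z by rewrite fop_addE xaE eaE.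
have ltau : lvl 1 tau by apply: lvlD; [apply: (Tf_lvl1 tG) | apply: (Tf_lvl1 tH)].
exists m.+1; split=> //; rewrite -tz.
have -> : g (h z) - z - tau z = (g * h - expT m.+2 tau) z + (expT m.+2 tau - 1 - tau) z.
  by rewrite !fop_subE fop_mulE fop_oneE !addrA subrK.
apply: filtrD; last by apply: filtr_expT_tail => //; rewrite tz.
by have := egh 0 z (filtr_top z); apply: filtr_le.
Qed.

Lemma prod_pointwise g h z m : G g -> H h -> ord_eq F (g (h z) - z) m ->
  exists2 f, sum_set TG TH f & ord_gt F (g (h z) - z - f z) m.
Proof.
move=> Gg Hh [hm _].
have [ga [_ [gaE Sga _ _ _]]] := Sf_lift sG Gg.
have [ha [_ [haE Sha _ _ _]]] := Sf_lift sH Hh.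
have Ps : GHf (ga * ha) by exists ga, ha.
have [xi [eta [Txi Teta es]]] := prod_log_approx (isT : 1 < m.+2)%N Ps.
exists (fun x => xi x + eta x); first by exists (fop_fun xi), (fop_fun eta).
set s := ga * ha; set tau := xi + eta.
have sz : s z = g (h z) by rewrite fop_mulE gaE haE.
rewrite -[xi z + eta z]/(tau z) -sz; rewrite -sz in hm.
have ltau : lvl 1 tau by apply: lvlD; [apply: (Tf_lvl1 tG) | apply: (Tf_lvl1 tH)].
have es_z : F m.+2 ((s - expT m.+2 tau) z) by have := es 0 z (filtr_top z).
have splitE : s z - z - tau z = (s - expT m.+2 tau) z + (expT m.+2 tau - 1 - tau) z.
  by rewrite !fop_subE fop_oneE !addrA subrK.
have tau_z : F m (tau z).
  suff : forall p, (p <= m)%N -> F p (tau z) by apply.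
  elim=> [|p IH] pm; first exact: filtr_top.
  have -> : tau z = (s z - z) - (s z - z - tau z) by rewrite opprB addrC subrK.
  rewrite splitE; apply: filtrB; first exact: filtr_le pm hm.
  apply: filtrD; first by apply: (filtr_le _ es_z); rewrite ltnS ltnW // ltnW.
  exact/filtr_expT_tail/IH/ltnW.
exists m.+1; split=> //; rewrite splitE.
by apply: filtrD; [apply: (filtr_le _ es_z) | apply: filtr_expT_tail].
Qed.
End ProductOfLieType.
End FilteredOperators.

Theorem lemma3p21 (R : comUnitRingType) (M : lmodType R)
  (F : nat -> M -> Prop) (G H TG TH : (M -> M) -> Prop) :
  (* k contains Q *)
  (forall n : nat, (n.+1)%:R \is a @GRing.unit R) ->
  filtration F ->
  subgroup1 F G -> subgroup1 F H ->
  (forall f, gen_subgroup F G H f <-> prod_set G H f) ->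
  submod1 F TG -> submod1 F TH ->
  (forall xi eta, TG xi -> TH eta ->
     TH (fun x => xi (eta x) - eta (xi x))) ->
  pointwise_Lie F TG G -> pointwise_Lie F TH H ->
  exp_ln_realized F TG G -> exp_ln_realized F TH H ->
  pointwise_Lie F (sum_set TG TH) (prod_set G H).
Proof.
(* The pointwise Lie hypotheses are consequences of the realization ones. *)
move=> hQ hF sG sH hGH tG tH hTH _ _ eG eH.
(* A vector of finite order is nonzero: it serves as the witness x0 <> 0
   needed by the ring structure on [fop]. *)
have ord_neq0 w m : ord_eq F w m -> w != 0.
  by apply: contraPneq => ->; apply: ord_eq_0.
split=> [f z [xi [eta [TGxi THeta ->]]] | f z [g [h [Gg Hh ->]]]].
- rewrite /=; apply: (ord_eq_choice (a0 := id \o id)) => [|m hm].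
    by exists id, id; split=> //; [case: sG | case: sH].
  exact: (sum_pointwise hF (ord_neq0 _ _ hm) hQ sH tG tH hTH eG eH TGxi THeta hm).
- rewrite /=; apply: (ord_eq_choice (a0 := fun x => (fun _ => 0 : M) x + (fun _ => 0 : M) x)).
    by exists (fun _ => 0), (fun _ => 0); split=> //; [case: tG | case: tH].
  move=> m hm.
  exact: (prod_pointwise hF (ord_neq0 _ _ hm) hQ sG sH hGH tG tH hTH eG eH Gg Hh hm).
Qed.
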